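(* Let $w$ be a string of length $n$ and $i$ a position of $w$ with $i-\mu(i)\ge1$, $i+\mu(i)-1\le n$ and $\mu(i)>1$. Suppose $j$ is an integer with $i<j<i+\mu(i)$ such that $\mu(j')<\mu(i)$ for each $j'$ with $i<j'\le j$. Then $w[j-\mu(j)..j+\mu(j)-1]$ is a substring of $w[i-\mu(i)..i+\mu(i)-1]$, in the sense that $i-\mu(i)\le j-\mu(j)$ and $j+\mu(j)\le i+\mu(i)$.
   Context: $w[a..b]=w[a]\cdots w[b]$. For a position $i\in\{1,\dots,n\}$ of $w$, the local period $\mu(i)$ is the least positive integer $\mu$ such that $w[j]=w[j+\mu]$ for all $j$ with $\max\{1,i-\mu\}\le j$ and $j+\mu\le\min\{n,i+\mu-1\}$. *)

From mathcomp Require Import all_boot.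
Set Implicit Arguments. Unset Strict Implicit. Unset Printing Implicit Defensive.

(* Strings are sequences w : seq T over an eqType T, positions are 1-based:
   the letter at position k (1 <= k <= size w) is  nth x0 w k.-1 ; we use
   [onth] so that no default letter is needed (only in-range positions
   are ever compared). *)
Definition letter (T : eqType) (w : seq T) (k : nat) : option T := onth w k.-1.

Definition local_rep (T : eqType) (w : seq T) (i m : nat) : bool :=
  [forall j : 'I_(size w).+1,
     ((maxn 1 (i - m) <= j) && (j + m <= minn (size w) (i + m - 1)))
       ==> (letter w j == letter w (j + m))].

Definition local_period_pred (T : eqType) (w : seq T) (i : nat) : pred nat :=
  fun m => (0 < m) && local_rep w i m.

Lemma local_period_exists (T : eqType) (w : seq T) (i : nat) :
  exists m, local_period_pred w i m.
Proof.
exists (size w).+1; rewrite /local_period_pred /=.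
apply/forallP => j; apply/implyP => /andP [H1 H2].
exfalso; move: H1 H2; rewrite geq_max => /andP [Hj _] Hm.
have := leq_trans Hm (geq_minl _ _); rewrite addnS ltnNge leq_addl.
by [].
Qed.

Definition mu (T : eqType) (w : seq T) (i : nat) : nat :=
  ex_minn (local_period_exists w i).

From mathcomp Require Import all_boot all_order zify.
Set Implicit Arguments. Unset Strict Implicit. Unset Printing Implicit Defensive.
Import Order.TTheory.

(* Suppose j + mu(j) > i + mu(i) and let Y = w[i..min(n, j + mu(j) - 1)].
   Y contains w[i..i+mu(i)-1], hence has no period q < mu(i): such a period
   would make mu(i) - q a local repetition at i.  By the critical
   factorization theorem, in the weak form given by the Crochemore-Perrin
   argument with the maximal suffixes for a total order and for its dual,
   Y has a position c, 0 < c < |Y|, at which every repetition to the left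
   of c is a period of Y.  If i + c <= j, the local period of w at i + c is
   such a repetition, and it is < mu(i) by hypothesis; otherwise mu(j) is.
   Either way Y gets a period smaller than mu(i). *)

Lemma onth_drop (T : Type) (s : seq T) n r : onth (drop n s) r = onth s (n + r).
Proof. by rewrite !onthE map_drop nth_drop. Qed.

Lemma onth_take (T : Type) (s : seq T) n r :
  onth (take n s) r = if r < n then onth s r else None.
Proof.
rewrite !onthE map_take; case: ltnP => [lt_rn|le_nr]; first by rewrite nth_take.
by rewrite nth_default // size_take; case: ltnP => //; lia.
Qed.

Lemma eq_take_drop (T : Type) (s : seq T) a b l :
  (forall r, r < l -> onth s (a + r) = onth s (b + r)) ->
  take l (drop a s) = take l (drop b s).
Proof.
move=> eq_ab; apply: eq_from_onth => r.
by rewrite !onth_take !onth_drop; case: ifP => // /eq_ab.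
Qed.

Definition has_period (A : Type) (s : seq A) q :=
  forall r, r + q < size s -> onth s r = onth s (r + q).

Definition left_rep (A : Type) (s : seq A) c q :=
  forall r, c - q <= r < c -> r + q < size s -> onth s r = onth s (r + q).

Definition critical_pos (A : Type) (s : seq A) c :=
  forall q, 0 < q -> left_rep s c q -> has_period s q.

Section Lexicographic.
Context {disp : Order.disp_t} (T : orderType disp).
Implicit Types s t u : seq T.

Lemma lexi_catl u s t : (u ++ s <= u ++ t :> seqlexi T)%O = (s <= t :> seqlexi T)%O.
Proof. by elim: u => //= x u IH; rewrite eqhead_lexiE. Qed.

Lemma lexi_drop_shift s a b l : take l (drop a s) = take l (drop b s) ->
  (drop a s <= drop b s :> seqlexi T)%O =
  (drop (l + a) s <= drop (l + b) s :> seqlexi T)%O.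
Proof.
move=> eq_take; rewrite -(cat_take_drop l (drop a s)) -(cat_take_drop l (drop b s)).
by rewrite eq_take lexi_catl !drop_drop.
Qed.

Lemma lexi_dual_prefix s t :
  (s <= t :> seqlexi T)%O -> (s <= t :> seqlexi T^d)%O -> prefix s t.
Proof.
elim: s t => [|x s IH] [|y t] //=; rewrite !lexi_cons.
move=> /andP[le_xy le_st] /andP[le_yx le_st'].
have exy : x = y by apply: le_anti; rewrite le_xy.
by rewrite exy eqxx /= IH // ?(implyP le_st) ?(implyP le_st') // exy.
Qed.

Definition max_suffix_pos s c :=
  forall k, k < size s -> (drop k s <= drop c s :> seqlexi T)%O.

Lemma exists_max_suffix_pos s :
  0 < size s -> exists2 c, c < size s & max_suffix_pos s c.
Proof.
move=> s_gt0.
have [c _ max_c] := @arg_maxP _ _ _ (Ordinal s_gt0) xpredT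
  (fun k : 'I_(size s) => drop k s : seqlexi T) erefl.
by exists c => // k lt_k; apply: (max_c (Ordinal lt_k)).
Qed.

End Lexicographic.

Lemma max_suffix_no_left_rep {disp : Order.disp_t} (T : orderType disp) (s : seq T) c q :
  c < size s -> max_suffix_pos s c -> 0 < q <= c -> ~ left_rep s c q.
Proof.
move=> lt_c max_c /andP[q_gt0 le_qc] rep_q; have := max_c (c - q) ltac:(lia).
have shift l : l <= q -> l + c <= size s ->
    (drop (c - q) s <= drop c s :> seqlexi T)%O =
    (drop (l + (c - q)) s <= drop (l + c) s :> seqlexi T)%O.
  move=> le_lq le_ls; apply/lexi_drop_shift/eq_take_drop => r lt_rl.
  by rewrite rep_q; [congr onth; lia | lia | lia].
have [le_sq|lt_qs] := leqP (size s - c) q.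
  have lt_s : size s - c + (c - q) < size s by lia.
  rewrite (shift (size s - c)) ?subnK ?drop_size ?lexis0; try lia.
  by rewrite -size_eq0 size_drop subn_eq0 leqNgt lt_s.
rewrite (shift q) ?subnKC //; last lia.
move=> le_c_qc; have eq_drop : drop c s = drop (q + c) s.
  by apply: (@le_anti _ (seqlexi T)); rewrite le_c_qc max_c //; lia.
by move/(congr1 size): eq_drop; rewrite !size_drop; lia.
Qed.

Lemma max_suffixes_left_rep_period {disp : Order.disp_t} (T : orderType disp)
    (s : seq T) c c' q :
  max_suffix_pos s c -> max_suffix_pos (T := T^d) s c' -> c' <= c < q ->
  left_rep s c q -> has_period s q.
Proof.
move=> max_c max_c' /andP[le_c'c lt_cq] rep_q.
have [le_sc|lt_cs] := leqP (size s) (c + q).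
  by move=> r lt_rs; apply: rep_q; lia.
(* The dual maximality of drop c' s forces drop (q + c) s to be a prefix of drop c s. *)
have agree : take (c - c') (drop (q + c') s) = take (c - c') (drop c' s).
  apply: eq_take_drop => r lt_r.
  by rewrite [RHS]rep_q; [congr onth; lia | lia | lia].
have lt_qc' : q + c' < size s by lia.
have := max_c' _ lt_qc'; rewrite (@lexi_drop_shift _ T^d _ _ _ _ agree).
have -> : c - c' + (q + c') = q + c by lia.
rewrite subnK // => le_dual.
have /prefixP [t def_t] : prefix (drop (q + c) s) (drop c s).
  by apply: lexi_dual_prefix => //; apply: max_c; lia.
move=> r lt_rs; have [lt_rc|le_cr] := ltnP r c; first by apply: rep_q; lia.
have lt_rcq : r - c < size (drop (q + c) s) by rewrite size_drop; lia.
rewrite -(subnKC le_cr) -onth_drop def_t onth_cat lt_rcq onth_drop.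
by congr onth; lia.
Qed.

Lemma max_suffix_critical {disp : Order.disp_t} (T : orderType disp) (s : seq T) c c' :
  c < size s -> max_suffix_pos s c -> max_suffix_pos (T := T^d) s c' -> c' <= c ->
  critical_pos s c.
Proof.
move=> lt_c max_c max_c' le_c'c q q_gt0 rep_q.
have [le_qc|lt_cq] := leqP q c.
  by case: (max_suffix_no_left_rep lt_c max_c _ rep_q); rewrite q_gt0.
by apply: (max_suffixes_left_rep_period max_c max_c') => //; rewrite le_c'c.
Qed.

Lemma lexi_critical_factorization {disp : Order.disp_t} (T : orderType disp) (s : seq T) :
  ~ has_period s 1 -> exists2 c, 0 < c < size s & critical_pos s c.
Proof.
move=> aper; have s_gt0 : 0 < size s by case: s aper => // aper; case: aper.
have [c1 lt_c1 max_c1] := exists_max_suffix_pos s_gt0.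
have [c2 lt_c2 max_c2] := exists_max_suffix_pos (T := T^d) s_gt0.
have [le_c21|lt_c12] := leqP c2 c1; last first.
  exists c2; first by rewrite lt_c2 andbT; lia.
  exact: (@max_suffix_critical _ T^d _ _ _ lt_c2 max_c2 max_c1 (ltnW lt_c12)).
exists c1; last exact: max_suffix_critical max_c1 max_c2 le_c21.
rewrite lt_c1 andbT lt0n; apply/negP => /eqP c1_0; apply: aper.
have c2_0 : c2 = 0 by lia.
have const k : k < size s -> onth s k = onth s 0.
  move=> lt_k; have /prefixP [t def_t] : prefix (drop k s) s.
    rewrite -[s in prefix _ s]drop0.
    by apply: lexi_dual_prefix; [rewrite -c1_0; apply: max_c1 | rewrite -c2_0; apply: max_c2].
  have lt_0k : 0 < size (drop k s) by rewrite size_drop subn_gt0.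
  have := congr1 (fun u => onth u 0) def_t.
  by rewrite onth_cat lt_0k onth_drop addn0 => ->.
by move=> r lt_r; rewrite !const //; lia.
Qed.

Section InjectiveMap.
Variables (A : eqType) (B : Type) (f : A -> B) (s : seq A).
Hypothesis f_inj : {in s &, injective f}.

Lemma onth_map_inj_in a b :
  onth (map f s) a = onth (map f s) b <-> onth s a = onth s b.
Proof.
rewrite !onth_map; split => [|->] //.
case sa: (onth s a) => [x|]; case sb: (onth s b) => [y|] //= [] fxy.
by congr Some; apply: f_inj fxy; apply/onthP; eexists; eassumption.
Qed.

Lemma has_period_map q : has_period (map f s) q <-> has_period s q.
Proof.
rewrite /has_period size_map.
by split=> per r lt_r; apply/onth_map_inj_in/per.
Qed.

Lemma left_rep_map c q : left_rep (map f s) c q <-> left_rep s c q.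
Proof.
rewrite /left_rep size_map.
by split=> rep r r_in lt_r; apply/onth_map_inj_in/rep.
Qed.

Lemma critical_pos_map c : critical_pos (map f s) c -> critical_pos s c.
Proof. by move=> crit q q_gt0 /left_rep_map/(crit q q_gt0)/has_period_map. Qed.

End InjectiveMap.

Lemma critical_factorization (T : eqType) (s : seq T) :
  ~ has_period s 1 -> exists2 c, 0 < c < size s & critical_pos s c.
Proof.
have code_inj : {in s &, injective (index^~ s)}.
  by move=> x y; apply: (@index_inj T x s).
move=> aper.
have [|c] := lexi_critical_factorization (T := nat) (s := map (index^~ s) s).
  by rewrite has_period_map.
move=> lt_c /(critical_pos_map code_inj) crit; exists c => //.
by rewrite -(size_map (index^~ s)); exact: lt_c.
Qed.

Section LocalPeriod.
Variables (T : eqType) (w : seq T).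

Lemma mu_gt0 i : 0 < mu w i.
Proof. by rewrite /mu; case: ex_minnP => m /andP[]. Qed.

Lemma local_rep_mu i : local_rep w i (mu w i).
Proof. by rewrite /mu; case: ex_minnP => m /andP[]. Qed.

Lemma mu_min i q : 0 < q -> local_rep w i q -> mu w i <= q.
Proof.
move=> q_gt0 rep_q; rewrite /mu; case: ex_minnP => m _; apply.
by rewrite /local_period_pred q_gt0.
Qed.

Lemma local_repP i m :
  reflect (forall k, maxn 1 (i - m) <= k -> k + m <= minn (size w) (i + m - 1) ->
                     letter w k = letter w (k + m))
          (local_rep w i m).
Proof.
apply: (iffP forallP) => [rep k k_ge k_le | rep k].
  have lt_k : k < (size w).+1 by lia.
  by apply/eqP; have /implyP := rep (Ordinal lt_k); apply; rewrite k_ge k_le.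
by apply/implyP => /andP[k_ge k_le]; apply/eqP/rep.
Qed.

(* The factor w[i..E] (1-based, both ends included). *)
Definition window i E := drop i.-1 (take E w).

Lemma size_window i E : E <= size w -> size (window i E) = E - i.-1.
Proof. by move=> le_E; rewrite size_drop size_take; case: ltnP; lia. Qed.

Lemma onth_window i E r :
  0 < i -> i.-1 + r < E -> onth (window i E) r = letter w (i + r).
Proof.
by move=> i_gt0 lt_r; rewrite onth_drop onth_take lt_r /letter; congr onth; lia.
Qed.

Lemma window_left_rep i E c k e : 0 < i -> E <= size w -> local_rep w k e ->
  minn (i + c) (E.+1 - e) <= k <= i + c -> left_rep (window i E) c e.
Proof.
move=> i_gt0 le_E /local_repP rep k_in r r_in; rewrite size_window // => lt_r.
by rewrite !onth_window ?addnA; [apply: rep | ..]; lia.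
Qed.

Lemma window_aperiodic i E q : 0 < i -> i + mu w i - 1 <= E <= size w ->
  0 < q < mu w i -> ~ has_period (window i E) q.
Proof.
move=> i_gt0 E_in q_in per; suff: mu w i <= mu w i - q by lia.
apply: mu_min; first lia.
apply/local_repP => k k_ge k_le.
have /local_repP rep := local_rep_mu i.
rewrite rep; try lia.
have /per : k + mu w i - q - i + q < size (window i E) by rewrite size_window; lia.
rewrite !onth_window //; try lia.
have -> : i + (k + mu w i - q - i) = k + (mu w i - q) by lia.
have -> : i + (k + mu w i - q - i + q) = k + mu w i by lia.
by move=> ->.
Qed.

End LocalPeriod.

Theorem lemma14 (T : eqType) (w : seq T) (i j : nat) :
  1 <= i <= size w ->
  mu w i < i ->
  i + mu w i <= (size w).+1 ->
  1 < mu w i ->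
  i < j < i + mu w i ->
  (forall j', i < j' <= j -> mu w j' < mu w i) ->
  i + mu w j <= j + mu w i /\ j + mu w j <= i + mu w i.
Proof.
move=> /andP[i_gt0 _] _ le_im gt1_m /andP[lt_ij lt_jm] mu_lt.
have lt_pm : mu w j < mu w i by apply: mu_lt; lia.
split; first lia.
rewrite leqNgt; apply/negP => lt_ij_p.
pose E := minn (size w) (j + mu w j - 1).
have aper q : 0 < q < mu w i -> ~ has_period (window w i E) q.
  by apply: window_aperiodic => //; rewrite /E; lia.
have [c /andP[c_gt0 lt_c] crit] := critical_factorization (aper 1 gt1_m).
rewrite size_window /E in lt_c; last lia.
have [le_cj|lt_jc] := leqP (i + c) j.
  apply: (aper (mu w (i + c))); first by rewrite mu_gt0 mu_lt //; lia.
  by apply/crit/(window_left_rep _ _ (local_rep_mu _ _)); rewrite ?mu_gt0 /E //; lia.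
apply: (aper (mu w j)); first by rewrite mu_gt0.
by apply/crit/(window_left_rep _ _ (local_rep_mu _ _)); rewrite ?mu_gt0 /E //; lia.
Qed.
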